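(* Let $p,p'\in[0,1]^N$ with $\|p-p'\|_0\le1$. If $\mathrm{FDP}[BH_q;p']\ne\mathrm{FDP}[BH_q;p]$, then $\tilde k'\ne\tilde k$.
   Context: $\mathcal N=\{1,\dots,N\}=\mathcal H_0\sqcup\mathcal H_1$ is a fixed partition of test indices into nulls and alternatives; $q\in(0,1)$. $\|p-p'\|_0$ is the number of indices $i$ with $p_i\ne p'_i$. For $x\in[0,1]^N$, its rejection count is $\tilde k(x)=\max\{i\in\{0,\dots,N\}:|\{j\in\mathcal N:0\le x_j<iq/N\}|=i\}$; the Benjamini–Hochberg procedure $BH_q$ rejects the tests $j$ with $x_j<\tilde k(x)q/N$, and $\mathrm{FDP}[BH_q;x]=|\{j\in\mathcal H_0:x_j<\tilde k(x)q/N\}|/\max(\tilde k(x),1)$. Write $\tilde k=\tilde k(p)$, $\tilde k'=\tilde k(p')$. *)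

From HB Require Import structures.
From mathcomp Require Import all_boot all_order all_algebra.
From mathcomp Require Export reals.
Set Implicit Arguments. Unset Strict Implicit. Unset Printing Implicit Defensive.
Import Order.TTheory GRing.Theory Num.Theory.
Local Open Scope ring_scope.

Section BH.
Variables (R : realType) (N : nat) (q : R).

Definition below_count (x : 'I_N -> R) (t : R) : nat :=
  #|[set j : 'I_N | (0 <= x j) && (x j < t)]|.

(* rejection count  k~(x) = max{ i in {0..N} : |{j : 0 <= x_j < i q/N}| = i };
   i = 0 always qualifies, so the default 0 of \max is harmless. *)
Definition ktilde (x : 'I_N -> R) : nat :=
  \max_(i < N.+1 | below_count x (i%:R * q / N%:R) == i) (i : nat).

Definition FDP_BH (H0 : {set 'I_N}) (x : 'I_N -> R) : R :=
  (#|[set j in H0 | x j < (ktilde x)%:R * q / N%:R]|)%:R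
    / (maxn (ktilde x) 1)%:R.

Definition l0dist (p p' : 'I_N -> R) : nat := #|[set i : 'I_N | p i != p' i]|.
End BH.

(** If the rejection count is the same for [p] and [p'], then both count [k]
    p-values in [[0, t)] for the common threshold [t = k q / N].  Since [p]
    and [p'] differ in at most one coordinate, the two sets of p-values below
    [t] agree off that coordinate and have the same size, hence coincide; so
    BH rejects the same tests and the FDP is unchanged. *)

From mathcomp Require Import all_boot all_order all_algebra reals.
Set Implicit Arguments. Unset Strict Implicit. Unset Printing Implicit Defensive.
Import Order.TTheory GRing.Theory Num.Theory.
Local Open Scope ring_scope.

Lemma setD1_card_eq (T : finType) (A B : {set T}) (j : T) :
  A :\ j = B :\ j -> #|A| = #|B| -> A = B.
Proof.
move=> eqAB cardAB; have jAB : (j \in A) = (j \in B).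
  have : ((j \in A) + #|A :\ j| = (j \in B) + #|B :\ j|)%N by rewrite -!cardsD1.
  by rewrite eqAB => /addIn; case: (j \in A); case: (j \in B).
apply/setP => i; have [->|nij] := eqVneq i j; first exact: jAB.
by have /setP/(_ i) := eqAB; rewrite !inE nij.
Qed.

Section BenjaminiHochberg.
Variables (R : realType) (N : nat) (q : R).
Implicit Types (x p : 'I_N -> R) (t : R).

Definition below_set x t : {set 'I_N} := [set j | (0 <= x j) && (x j < t)].

Lemma below_count_ktilde x :
  below_count x ((ktilde q x)%:R * q / N%:R) = ktilde q x.
Proof.
apply/eqP; rewrite /ktilde.
apply: (big_ind (fun m : nat => below_count x (m%:R * q / N%:R) == m)) => //.
- rewrite /below_count !mul0r cards_eq0; apply/eqP/setP => j.
  by rewrite !inE; case: leP.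
- by move=> a b; rewrite /maxn; case: ifP.
Qed.

Lemma FDP_BH_below_set (H0 : {set 'I_N}) x : (forall i, 0 <= x i) ->
  FDP_BH q H0 x = #|H0 :&: below_set x ((ktilde q x)%:R * q / N%:R)|%:R
                    / (maxn (ktilde q x) 1)%:R.
Proof.
move=> x_ge0; congr (_%:R / _); apply: eq_card => j.
by rewrite !inE x_ge0.
Qed.

Lemma l0dist_le1_eq p (p' : 'I_N -> R) j : (l0dist p p' <= 1)%N -> p j != p' j ->
  forall i, i != j -> p i = p' i.
Proof.
move=> /card_le1_eqP diff_eq neqj i nij; apply/eqP.
by apply: contraNT nij => neqi; apply/eqP/diff_eq; rewrite inE.
Qed.

Lemma below_set_eq p (p' : 'I_N -> R) t : (l0dist p p' <= 1)%N ->
  below_count p t = below_count p' t -> below_set p t = below_set p' t.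
Proof.
move=> dist1 eq_count; have [j neqj|eqpp'] := pickP (fun j => p j != p' j).
  apply: (@setD1_card_eq _ _ _ j) => //; apply/setP => i; rewrite !inE.
  by have [//|nij] := eqVneq i j; rewrite (l0dist_le1_eq dist1 neqj nij).
by apply/setP => i; rewrite !inE; have /negbFE/eqP -> := eqpp' i.
Qed.

End BenjaminiHochberg.

Theorem lemma2 (R : realType) (N : nat) (H0 : {set 'I_N}) (q : R)
  (p p' : 'I_N -> R) :
  0 < q < 1 ->
  (forall i, 0 <= p i <= 1) -> (forall i, 0 <= p' i <= 1) ->
  (l0dist p p' <= 1)%N ->
  FDP_BH q H0 p' != FDP_BH q H0 p ->
  ktilde q p' != ktilde q p.
Proof.
move=> _ p01 p'01 dist1; apply: contraNneq => eq_k.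
have p_ge0 i : 0 <= p i by case/andP: (p01 i).
have p'_ge0 i : 0 <= p' i by case/andP: (p'01 i).
set t := (ktilde q p)%:R * q / N%:R.
have eq_count : below_count p t = below_count p' t.
  by rewrite below_count_ktilde -eq_k -below_count_ktilde eq_k.
rewrite !FDP_BH_below_set // eq_k -/t.
by rewrite (below_set_eq dist1 eq_count).
Qed.
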